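(* Let $d\geq 2$ and let $U=(u_{ij})\in\mathcal{U}_d(\mathbb{C})$ be such that there exists $M\in\mathbb{N}$ for which $(P_U^TP_U)^M$ has all entries non-zero. Let $\mathcal{F}_A=\mathcal{DU}_d(\mathbb{C})$ and $\mathcal{F}_B=\{U^\dagger DU: D\in\mathcal{DU}_d(\mathbb{C})\}$. Then every unitary matrix $V\in\mathcal{U}_d(\mathbb{C})$ can be written as a finite product of matrices each belonging to $\mathcal{F}_A$ or to $\mathcal{F}_B$.
   Context: $\mathcal{U}_d(\mathbb{C})$ denotes the group of $d\times d$ unitary matrices and $\mathcal{DU}_d(\mathbb{C})$ its subgroup of diagonal unitary matrices. $P_U=(p_{ij})$ is the $0/1$ matrix with $p_{ij}=0$ if $u_{ij}=0$ and $p_{ij}=1$ if $u_{ij}\neq 0$. *)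

From HB Require Import structures.
From mathcomp Require Import all_boot all_order all_algebra.
From mathcomp Require Import complex.
From mathcomp Require Import reals.
Set Implicit Arguments. Unset Strict Implicit. Unset Printing Implicit Defensive.
Import Order.TTheory GRing.Theory Num.Theory.
Local Open Scope ring_scope.

Definition adjmx (R : realType) (d : nat) (U : 'M[R[i]]_d) : 'M[R[i]]_d :=
  (map_mx (fun z : R[i] => z^*) U)^T.

Definition unitary (R : realType) (d : nat) (U : 'M[R[i]]_d) : Prop :=
  adjmx U *m U = 1%:M /\ U *m adjmx U = 1%:M.

Definition diag_unitary (R : realType) (d : nat) (D : 'M[R[i]]_d) : Prop :=
  is_diag_mx D /\ unitary D.

Definition pattern_mx (R : realType) (d : nat) (U : 'M[R[i]]_d) : 'M[int]_d :=
  \matrix_(i, j) (if U i j == 0 then 0 else 1).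

(* matrix power by iterated product (valid for any dimension d) *)
Definition mxpow (T : pzRingType) (d : nat) (A : 'M[T]_d) (k : nat) : 'M[T]_d :=
  iter k (fun B => A *m B) 1%:M.

Definition mxprod (T : pzRingType) (d : nat) (s : seq 'M[T]_d) : 'M[T]_d :=
  foldr (fun A B => A *m B) 1%:M s.

(* Call a nonzero row vector w reflectable when every complex reflection
   1 + (a - 1) w^* w / |w|^2 with |a| = 1 is a product of generators.  The basis
   vectors e_j are reflectable (their reflections are diagonal), and so are the
   rows of U (their reflections are U^* D U with D diagonal).  Conjugating the
   reflection along w by a reflection along y gives the reflection along the
   image of w, so reflecting a reflectable vector along a reflectable vector
   keeps it reflectable.  For reflectable x, y with <x, y> <> 0 and y not
   parallel to x, such reflections move the overlap |<x, y>|^2 / (|x|^2 |y|^2)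
   to exactly 1/2 in finitely many steps (p = 4 q (1 - q) follows the logistic
   map), and at overlap 1/2 two reflections reach every vector of span(x, y).
   Connectivity of the graph of P_U^T P_U then spreads reflectability to every
   nonzero vector: a vector supported on S + {l} is sent by a Householder
   reflection supported on S into span(e_j, e_l), where j in S and l share a row
   of U.  Finally V = P^* diag(r) P with P unitary (spectral theorem), and
   diag(r) is the product of the reflections along the e_k, so V is the product
   of the reflections along the rows of P. *)

From HB Require Import structures.
From mathcomp Require Import all_boot all_order all_algebra.
From mathcomp Require Import complex reals.
From mathcomp Require Import ring lra zify.
From mathcomp Require Import sesquilinear spectral.
Import Order.TTheory GRing.Theory Num.Theory.
Local Open Scope ring_scope.
Local Open Scope sesquilinear_scope.
Set Implicit Arguments. Unset Strict Implicit. Unset Printing Implicit Defensive.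

Lemma mxprod_cat (T : pzRingType) d (s1 s2 : seq 'M[T]_d) :
  mxprod (s1 ++ s2) = mxprod s1 *m mxprod s2.
Proof. by elim: s1 => [|A s IH] /=; rewrite ?mul1mx // IH mulmxA. Qed.

Lemma mxprod_conj (T : pzRingType) d (A B : 'M[T]_d) (s : seq 'M[T]_d) :
  A *m B = 1%:M -> B *m A = 1%:M ->
  A *m mxprod s *m B = mxprod [seq A *m M *m B | M <- s].
Proof.
move=> AB BA; elim: s => [|M s IH] /=; first by rewrite mulmx1.
by rewrite -IH !mulmxA -[A *m M *m B *m A]mulmxA BA mulmx1.
Qed.

Lemma mxpow_block0 (T : pzRingType) d (A : 'M[T]_d) (S : {set 'I_d}) :
  (forall j i, j \in S -> i \notin S -> A j i = 0) ->
  forall m j i, j \in S -> i \notin S -> mxpow A m j i = 0.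
Proof.
move=> A0; elim=> [|m IH] j i jS iS.
  have ji : j != i by apply: contraNneq iS => <-.
  by rewrite mxE (negbTE ji).
rewrite /mxpow /= -/(mxpow A m) mxE big1 // => k _.
have [kS|kS] := boolP (k \in S); first by rewrite (IH k i kS iS) mulr0.
by rewrite (A0 j k jS kS) mul0r.
Qed.

Lemma logistic_half (R : realFieldType) (q : R) :
  1 / 2 <= 4 * q * (1 - q) -> (1 - 2 * q) ^+ 2 <= 1 / 2.
Proof. by move=> p_ge; nra. Qed.

Lemma logistic_double (R : realFieldType) (q K : R) : 0 < q < 1 -> 0 <= K ->
  4 * q * (1 - q) < 1 / 2 -> 1 / 2 <= 2 * K * (4 * q * (1 - q)) ->
  let q' := (1 - 2 * q) ^+ 2 in 0 < q' < 1 /\ 1 / 2 <= K * (4 * q' * (1 - q')).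
Proof.
move=> /andP[q0 q1] K0 p_lt p_k q'; have p0 : 0 < 4 * q * (1 - q) by nra.
have -> : q' = 1 - 4 * q * (1 - q) by rewrite /q'; ring.
split; first by apply/andP; split; lra.
move: (4 * q * (1 - q)) p0 p_lt p_k => p p0 p_lt p_k.
have : 0 <= K * p * (1 - 2 * p) by rewrite !mulr_ge0 //; lra.
by nra.
Qed.

Lemma logistic_bound (R : archiRealFieldType) (q : R) : 0 < q < 1 ->
  exists k, 1 / 2 <= 2 ^+ k * (4 * q * (1 - q)).
Proof.
move=> /andP[q0 q1]; have p0 : 0 < 4 * q * (1 - q) by nra.
move: (4 * q * (1 - q)) p0 => p p0; exists (Num.bound (1 / p)).
have := upper_nthrootP (leqnn (Num.bound (1 / p))).
by rewrite ltr_pdivrMr // => /ltW; apply: le_trans; lra.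
Qed.

Section ComplexFacts.
Variable R : rcfType.
Local Notation C := R[i].
Local Notation "x %:C" := (real_complex R x).
Implicit Types (z w : C) (r : R).

Definition normc2 z : R := complex.Re z ^+ 2 + complex.Im z ^+ 2.

Lemma mulJc z : z^* * z = (normc2 z)%:C.
Proof. by case: z => a b; rewrite /normc2 /=; simpc; congr Complex; ring. Qed.

Lemma mulcJ z : z * z^* = (normc2 z)%:C.
Proof. by rewrite mulrC mulJc. Qed.

Lemma normc20 : normc2 0 = 0.
Proof. by rewrite /normc2 /= expr0n addr0. Qed.

Lemma normc2_ge0 z : 0 <= normc2 z.
Proof. by rewrite addr_ge0 ?sqr_ge0. Qed.

Lemma normc2_eq0 z : (normc2 z == 0) = (z == 0).
Proof. by case: z => a b; rewrite /normc2 paddr_eq0 ?sqr_ge0 // !sqrf_eq0 eq_complex. Qed.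

Lemma normc2_gt0 z : (0 < normc2 z) = (z != 0).
Proof. by rewrite lt_def normc2_eq0 normc2_ge0 andbT. Qed.

Lemma normc2M z w : normc2 (z * w) = normc2 z * normc2 w.
Proof. by case: z => a b; case: w => c e; rewrite /normc2 /=; ring. Qed.

Lemma normc2J z : normc2 z^* = normc2 z.
Proof. by case: z => a b; rewrite /normc2 /= sqrrN. Qed.

Lemma normc2R r : normc2 r%:C = r ^+ 2.
Proof. by rewrite /normc2 /=; ring. Qed.

Lemma conjcR r : r%:C^* = r%:C.
Proof. by apply/eqP; rewrite eq_complex /= oppr0 !eqxx. Qed.

Lemma realc_eq0 r : (r%:C == 0) = (r == 0).
Proof. by rewrite -(rmorph0 (real_complex R)) (inj_eq (@complexI R)). Qed.

Lemma unimodular_Re m : -1 <= m <= 1 ->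
  exists mu : C, [/\ mu * mu^* = 1, complex.Re mu = m & complex.Im mu ^+ 2 = 1 - m ^+ 2].
Proof.
move=> /andP[m1 m2]; have s2 : Num.sqrt (1 - m ^+ 2) ^+ 2 = 1 - m ^+ 2.
  by apply: sqr_sqrtr; nra.
exists (Complex m (Num.sqrt (1 - m ^+ 2))); split => //.
by rewrite mulcJ /normc2 /= s2 subrKC.
Qed.

Lemma unimodular_affine_normc2 (q t : R) : 0 < q < 1 -> (1 - 2 * q) ^+ 2 <= t <= 1 ->
  exists mu : C, [/\ mu * mu^* = 1, normc2 (1 + (mu - 1) * q%:C) = t & (t < 1 -> mu != 1)].
Proof.
move=> /andP[q0 q1] /andP[t0 t1]; have D0 : 0 < 2 * q * (1 - q) by nra.
(* Re mu = m makes normc2 (1 + (mu - 1) q) = 1 - 2 q (1 - q) (1 - m) *)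
pose m := 1 - (1 - t) / (2 * q * (1 - q)).
have m_ge : -1 <= m.
  rewrite -subr_ge0 opprK; have -> : m + 1 = (t - (1 - 2 * q) ^+ 2) / (2 * q * (1 - q)).
    by rewrite /m; field; lra.
  by rewrite divr_ge0 //; lra.
have m_le : m <= 1 by rewrite /m gerBl divr_ge0 //; lra.
have m_range : -1 <= m <= 1 by rewrite m_ge m_le.
have [mu [mu1 Remu Immu]] := unimodular_Re m_range.
exists mu; split => //.
  case: mu mu1 Remu Immu => a b _ /= -> Immu.
  rewrite /normc2 /=; simpc; rewrite /= exprMn Immu /m; field; lra.
move=> t_lt1; have m_lt : m < 1 by rewrite /m gtrBl divr_gt0 //; lra.
by apply: contra_ltN m_lt => /eqP mu_1; rewrite -Remu mu_1.
Qed.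

Lemma unimodular_cayley w : exists mu lam : C,
  [/\ mu * mu^* = 1, lam * lam^* = 1, mu != 1 & lam * (1 + mu) = (mu - 1) * w].
Proof.
have [->|w0] := eqVneq w 0.
  exists (-1), 1; split; last by rewrite addrN !mulr0.
  - by rewrite rmorphN rmorph1 mulrNN mulr1.
  - by rewrite rmorph1 mulr1.
  - by rewrite eq_sym -addr_eq0 -mulr2n pnatr_eq0.
have r0 : 0 < normc2 w by rewrite normc2_gt0.
set r := normc2 w in r0.
(* Re mu = m makes |mu - 1|^2 r = |mu + 1|^2 *)
pose m := (r - 1) / (r + 1).
have m_gt : -1 < m by rewrite /m ltrNl -mulNr ltr_pdivrMr; lra.
have m_lt : m < 1 by rewrite /m ltr_pdivrMr; lra.
have m_range : -1 <= m <= 1 by rewrite !ltW.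
have [mu [mu1 Remu Immu]] := unimodular_Re m_range.
have mu_neq1 : mu != 1 by apply: contra_ltN m_lt => /eqP mu_1; rewrite -Remu mu_1.
have mu_neqN1 : 1 + mu != 0.
  by apply: contra_ltN m_gt; rewrite addrC addr_eq0 => /eqP mu_N1; rewrite -Remu mu_N1.
have eN : normc2 ((mu - 1) * w) = normc2 (1 + mu).
  rewrite normc2M -/r; case: mu {mu1 mu_neq1 mu_neqN1} Remu Immu => a b /= -> Immu.
  by rewrite /normc2 /= subr0 add0r Immu /m; field; lra.
exists mu, ((mu - 1) * w / (1 + mu)); split => //; last by rewrite divfK.
have -> : (mu - 1) * w / (1 + mu) * ((mu - 1) * w / (1 + mu))^* =
    ((mu - 1) * w) * ((mu - 1) * w)^* / ((1 + mu) * (1 + mu)^*).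
  by rewrite fmorph_div /= -mulf_div.
by rewrite !mulcJ eN divff // realc_eq0 normc2_eq0.
Qed.
End ComplexFacts.

Section Reflections.
Variables (R : rcfType) (n : nat).
Local Notation C := R[i].
Local Notation "x %:C" := (real_complex R x).
Local Notation "''[' u , v ]" := (@dotmx C n u v).
Local Notation "''[' u ]" := (@dotmx C n u u).
Implicit Types (u v w x y z : 'rV[C]_n) (a b c : C).

Lemma dotmxC u v : '[u, v]^* = '[v, u].
Proof. by rewrite [RHS]hermC /= expr0 mul1r. Qed.

Lemma dotmx_deltar v j : '[v, 'e_j] = v 0 j.
Proof.
rewrite dotmxE mxE (bigD1 j) //= big1 => [|k /negbTE kj]; rewrite !mxE ?eqxx.
  by rewrite conjC1 mulr1 addr0.
by rewrite kj conjC0 mulr0.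
Qed.

Lemma dotmx_deltal j v : '['e_j, v] = (v 0 j)^*.
Proof. by rewrite -dotmx_deltar dotmxC. Qed.

Lemma delta_entry (i j : 'I_n) : ('e_j : 'rV[C]_n) 0 i = (i == j)%:R.
Proof. by rewrite mxE eqxx. Qed.

Lemma dotmx_unitary g u v : g \is unitarymx -> '[u *m g, v *m g] = '[u, v].
Proof. by move=> gU; rewrite !dotmxE trmx_mul map_mxM mulmxA mulmxtVK. Qed.

Definition dnormR u : R := complex.Re '[u].

Lemma dnormRE u : '[u] = (dnormR u)%:C.
Proof. by rewrite /dnormR RRe_real // ger0_real // dnorm_ge0. Qed.

Lemma dnormR_gt0 u : (0 < dnormR u) = (u != 0).
Proof. by rewrite -ltcR -dnormRE; exact: dnorm_gt0. Qed.

Definition overlap u v : R := normc2 '[u, v] / (dnormR u * dnormR v).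

Lemma overlap_dotmx0 u v : '[u, v] = 0 -> overlap u v = 0.
Proof. by rewrite /overlap => ->; rewrite normc20 mul0r. Qed.

Lemma overlap_gt0 u v : '[u, v] != 0 -> u != 0 -> v != 0 -> 0 < overlap u v.
Proof.
by move=> uv u0 v0; rewrite divr_gt0 ?mulr_gt0 ?normc2_gt0 ?dnormR_gt0.
Qed.

Lemma dnorm_sub_proj u v : u != 0 ->
  '[v - ('[v, u] / '[u]) *: u] = '[v] - '[u, v] * '[v, u] / '[u].
Proof.
move=> u0; have : '[u] != 0 by rewrite dnorm_eq0.
rewrite linearBl !linearBr /= !linearZl_LR !linearZr_LR /= fmorph_div /=.
have := dotmxC u u; have := dotmxC v u.
by move: '[u] '[v] '[u, v] '[v, u] => N M g g' -> -> N0; field.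
Qed.

Lemma overlap_lt1 u v : u != 0 -> (forall c, v != c *: u) -> overlap u v < 1.
Proof.
move=> u0 v_u; have U0 : 0 < dnormR u by rewrite dnormR_gt0.
have V0 : 0 < dnormR v.
  by rewrite dnormR_gt0; apply: contra (v_u 0) => /eqP->; rewrite scale0r.
have r0 : v - ('[v, u] / '[u]) *: u != 0 by rewrite subr_eq0 v_u.
move: (dnorm_sub_proj v u0) r0; move: (v - _) => r.
rewrite -(dotmxC v u) mulJc !dnormRE -fmorphV -rmorphM -rmorphB => /complexI nrm2_r.
rewrite -dnormR_gt0 nrm2_r subr_gt0 (ltr_pdivrMr _ _ U0) => lt_uv.
by rewrite /overlap -(dotmxC v u) normc2J (ltr_pdivrMr _ _ (mulr_gt0 U0 V0)) mul1r mulrC.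
Qed.


Lemma mulmx_unitary_eq0 m (v : 'M[C]_(m, n)) (g : 'M[C]_n) : g \is unitarymx ->
  (v *m g == 0) = (v == 0).
Proof.
move=> gU; apply/eqP/eqP => [vg0|->]; last by rewrite mul0mx.
by rewrite -[v]mulmx1 -(unitarymxP gU) mulmxA vg0 mul0mx.
Qed.

Definition reflmx w a : 'M[C]_n := 1%:M + ((a - 1) / '[w]) *: (w^t* *m w).

Lemma mul_reflmx v w a : v *m reflmx w a = v + ((a - 1) / '[w] * '[v, w]) *: w.
Proof.
rewrite mulmxDr mulmx1 -scalemxAr mulmxA [v *m _]mx11_scalar -dotmxE.
by rewrite mul_scalar_mx scalerA.
Qed.

Lemma reflmx_fix v w a : '[v, w] = 0 -> v *m reflmx w a = v.
Proof. by move=> vw; rewrite mul_reflmx vw mulr0 scale0r addr0. Qed.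

Lemma reflmx1 w : reflmx w 1 = 1%:M.
Proof. by rewrite /reflmx subrr mul0r scale0r addr0. Qed.

Lemma reflmxZ c w a : c != 0 -> reflmx (c *: w) a = reflmx w a.
Proof.
move=> c0; have [->|w0] := eqVneq w 0; first by rewrite scaler0.
have : '[w] != 0 by rewrite dnorm_eq0.
rewrite /reflmx; have -> : (c *: w)^t* = c^* *: w^t* by rewrite -map_mxZ linearZ.
rewrite linearZl_LR linearZr_LR /= -scalemxAl -scalemxAr.
rewrite !scalerA; move: '[w] => N N0; congr (_ + _ *: _).
by field; rewrite N0 c0 conjC_eq0 c0.
Qed.

Lemma reflmx_adj w a : (reflmx w a)^t* = reflmx w a^*.
Proof.
rewrite /reflmx linearD /= map_mxD trmx1 map_mx1 linearZ /= map_mxZ trmx_mul map_mxM.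
by rewrite trmxCK fmorph_div /= (dotmxC w w) rmorphB /= conjC1.
Qed.

Lemma reflmxM w a b : w != 0 -> reflmx w a *m reflmx w b = reflmx w (a * b).
Proof.
move=> w0; have ww : (w^t* *m w) *m (w^t* *m w) = '[w] *: (w^t* *m w).
  rewrite mulmxA -[w^t* *m w *m _]mulmxA [w *m _]mx11_scalar -dotmxE.
  by rewrite mul_mx_scalar scalemxAl.
rewrite /reflmx mulmxDl mul1mx mulmxDr mulmx1 -scalemxAl -scalemxAr ww !scalerA.
rewrite -!addrA; congr (_ + _); rewrite -!scalerDl; congr (_ *: _).
have : '[w] != 0 by rewrite dnorm_eq0.
by move: '[w] => N N0; field.
Qed.

Lemma reflmx_unitary w a : w != 0 -> a * a^* = 1 -> reflmx w a \is unitarymx.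
Proof. by move=> w0 a1; apply/unitarymxP; rewrite reflmx_adj reflmxM // a1 reflmx1. Qed.

Lemma reflmx_conj g w a : g \is unitarymx ->
  g^t* *m reflmx w a *m g = reflmx (w *m g) a.
Proof.
move=> gU; have gtg : g^t* *m g = 1%:M.
  by move: gU; rewrite -trmxC_unitary => /unitarymxP; rewrite trmxCK.
rewrite /reflmx dotmx_unitary // mulmxDr mulmxDl mulmx1 gtg -scalemxAr -scalemxAl.
by rewrite trmx_mul map_mxM !mulmxA.
Qed.

Lemma reflmx_delta j a : reflmx 'e_j a = diag_mx (\row_i (if i == j then a else 1)).
Proof.
rewrite /reflmx.
have -> : ('e_j : 'rV[C]_n)^t* = delta_mx j 0.
  by apply/matrixP => i k; rewrite !mxE rmorph_nat andbC.
rewrite dotmx_deltar mxE !eqxx /= divr1 mul_delta_mx.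
apply/matrixP => i k; rewrite !mxE; have [<-|ik] := eqVneq i k.
  by rewrite andbb; case: (i == j); rewrite /= ?mulr1 ?mulr0 ?addr0 // addrC subrK.
case: eqVneq => [ij|_]; last by rewrite add0r mulr0.
by rewrite -ij eq_sym (negbTE ik) add0r mulr0.
Qed.

Lemma reflmx_swap u y : '[u] = '[y] -> '[u, y] = '[y, u] -> u != y ->
  u *m reflmx (u - y) (-1) = y.
Proof.
move=> uu uy u_y; rewrite mul_reflmx.
have : '[u - y] != 0 by rewrite dnorm_eq0 subr_eq0.
have -> : '[u - y] = 2 * '[u, u - y].
  by rewrite !(linearBl, linearBr) /= -uu uy; move: '[u] '[y, u] => N g; ring.
move: '[u, u - y] => c c20; have c0 : c != 0 by apply: contraNneq c20 => ->; rewrite mulr0.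
have -> : (-1 - 1) / (2 * c) * c = -1 by field.
by rewrite scaleN1r opprB addrC subrK.
Qed.

Lemma overlapE x y : (overlap x y)%:C = '[x, y] * '[y, x] / ('[x] * '[y]).
Proof.
rewrite /overlap rmorphM fmorphV rmorphM /= -!dnormRE -mulcJ.
by congr (_ * _ / _); apply: dotmxC.
Qed.

Lemma dotmx_reflmx x y mu : x != 0 -> y != 0 ->
  '[x *m reflmx y mu, x] = '[x] * (1 + (mu - 1) * (overlap x y)%:C).
Proof.
move=> x0 y0; have : '[x] != 0 by rewrite dnorm_eq0.
have : '[y] != 0 by rewrite dnorm_eq0.
rewrite mul_reflmx linearDl linearZl_LR /= overlapE.
by move: '[x] '[y] '[x, y] '[y, x] => N M g g' M0 N0; field; rewrite M0 N0.
Qed.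

Lemma reflmx_reflmx x y mu lam : x != 0 -> y != 0 ->
  x *m reflmx y mu *m reflmx x lam =
  (1 + (lam - 1) * (1 + (mu - 1) * (overlap x y)%:C)) *: x +
  ((mu - 1) / '[y] * '[x, y]) *: y.
Proof.
move=> x0 y0; have : '[x] != 0 by rewrite dnorm_eq0.
rewrite mul_reflmx dotmx_reflmx // mul_reflmx addrAC scalerDl scale1r.
by move: '[x] => N N0; congr (_ + _ *: _ + _); field.
Qed.

Lemma row_unitarymx_neq0 m (P : 'M[C]_(m, n)) k : P \is unitarymx -> row k P != 0.
Proof.
move=> /row_unitarymxP/(_ k k); rewrite eqxx => Pkk; apply/eqP => Pk0.
by move: Pkk; rewrite Pk0 linear0l => /eqP; rewrite eq_sym oner_eq0.
Qed.

Lemma delta_neq0 j : 'e_j != 0 :> 'rV[C]_n.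
Proof.
rewrite -row1 row_unitarymx_neq0 //.
by apply/unitarymxP; rewrite trmx1 map_mx1 mulmx1.
Qed.

Lemma exists_phase a : exists ph : C, ph * ph^* = 1 /\ ph * a \is Num.real.
Proof.
have [->|a0] := eqVneq a 0.
  by exists 1; rewrite rmorph1 mulr1 mulr0 real0.
exists (`|a| / a); split; last by rewrite divfK // normr_real.
rewrite fmorph_div /= conj_Creal ?normr_real // mulrACA -expr2 -invfM normCK.
by rewrite divff // mul_conjC_eq0.
Qed.

Lemma exists_delta_mirror u j : exists s : C,
  '[s *: 'e_j] = '[u] /\ '[u, s *: 'e_j] = '[s *: 'e_j, u].
Proof.
have [ph [ph1 phR]] := exists_phase (u 0 j).
have u_ge0 : 0 <= dnormR u by rewrite -lecR -dnormRE dnorm_ge0.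
exists ((Num.sqrt (dnormR u))%:C * ph^*); split.
  rewrite linearZl_LR linearZr_LR /= dotmx_deltar mxE !eqxx mulr1 rmorphM /= conjCK.
  by rewrite conjcR mulrACA [ph^* * ph]mulrC ph1 mulr1 -rmorphM -expr2 sqr_sqrtr // dnormRE.
rewrite -[RHS]dotmxC linearZr_LR /= dotmx_deltar rmorphM /= conjcR conjCK -mulrA.
by rewrite [RHS]rmorphM /= conjcR conj_Creal.
Qed.

Lemma diag_mx_reflmx (r : 'rV[C]_n) :
  diag_mx r = mxprod [seq reflmx 'e_k (r 0 k) | k <- enum 'I_n].
Proof.
have prodE s : uniq s -> mxprod [seq reflmx 'e_k (r 0 k) | k <- s] =
    diag_mx (\row_i (if i \in s then r 0 i else 1)).
  elim: s => [_|k s IH /= /andP[ks /IH ->]].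
    by apply/matrixP => i j; rewrite !mxE.
  rewrite reflmx_delta mulmx_diag; congr diag_mx; apply/rowP => i; rewrite !mxE inE.
  by have [->|_] := eqVneq i k; rewrite ?(negbTE ks) ?mulr1 ?mul1r.
by rewrite prodE ?enum_uniq //; congr diag_mx; apply/rowP => i; rewrite mxE mem_enum.
Qed.

End Reflections.

Lemma unitarymx_spectral (C : numClosedFieldType) n (V : 'M[C]_n) : V \is unitarymx ->
  exists P (r : 'rV[C]_n),
    [/\ P \is unitarymx, forall k, r 0 k * (r 0 k)^* = 1 & V = P^t* *m diag_mx r *m P].
Proof.
move=> VU; have VtV : V^t* *m V = 1%:M.
  by move: VU; rewrite -trmxC_unitary => /unitarymxP; rewrite trmxCK.
have /orthomx_spectralP : V \is normalmx by apply/normalmxP; rewrite VtV (unitarymxP VU).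
have PU := spectral_unitarymx V; rewrite invmx_unitary //.
set P := spectralmx V; set r := spectral_diag V => VE.
exists P, r; split => // k.
have rU : diag_mx r \is unitarymx.
  have -> : diag_mx r = P *m V *m P^t*.
    by rewrite VE !mulmxA (unitarymxP PU) mul1mx mulmxtVK.
  by rewrite !mul_unitarymx // trmxC_unitary.
by move/unitarymxP/matrixP: rU => /(_ k k); rewrite mul_diag_mx !mxE !eqxx mulr1n.
Qed.

Lemma adjmxE (R : realType) d (A : 'M[R[i]]_d) : adjmx A = A^t*.
Proof. by rewrite /adjmx map_trmx. Qed.

Lemma unitaryP (R : realType) d (A : 'M[R[i]]_d) : unitary A <-> A \is unitarymx.
Proof.
rewrite /unitary !adjmxE; split => [[_ /unitarymxP]//|AU].
by split; [apply: mulmx1C; apply/unitarymxP | apply/unitarymxP].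
Qed.

Section Generated.
Variables (R : realType) (d : nat) (U : 'M[R[i]]_d).
Hypothesis UU : U \is unitarymx.
Local Notation C := R[i].
Local Notation "''[' u , v ]" := (@dotmx C d u v).
Local Notation "''[' u ]" := (@dotmx C d u u).
Implicit Types (u v w x y z : 'rV[C]_d) (a b c : C).

Definition generator (A : 'M[C]_d) : Prop :=
  diag_unitary A \/ exists D, diag_unitary D /\ A = adjmx U *m D *m U.

Definition generated (A : 'M[C]_d) : Prop :=
  exists s, (forall B, B \in s -> generator B) /\ A = mxprod s.

Lemma generated_mul A B : generated A -> generated B -> generated (A *m B).
Proof.
move=> [s1 [s1G ->]] [s2 [s2G ->]]; exists (s1 ++ s2); rewrite mxprod_cat.
by split=> // M; rewrite mem_cat => /orP[/s1G|/s2G].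
Qed.

Lemma generated_mxprod s : (forall A, A \in s -> generated A) -> generated (mxprod s).
Proof.
elim: s => [_|A s IH sG] /=; first by exists [::].
apply: generated_mul; first by apply: sG; rewrite mem_head.
by apply: IH => B Bs; apply: sG; rewrite inE Bs orbT.
Qed.

Lemma generator_generated A : generator A -> generated A.
Proof. by exists [:: A]; rewrite /= mulmx1; split=> // B; rewrite inE => /eqP ->. Qed.

Lemma diag_unitary_reflmx_delta (j : 'I_d) a : a * a^* = 1 -> diag_unitary (reflmx 'e_j a).
Proof.
move=> a1; split; first by rewrite reflmx_delta diag_mx_is_diag.
by apply/unitaryP/reflmx_unitary => //; apply: delta_neq0.
Qed.

Definition reflectable w : Prop :=
  w != 0 /\ forall a, a * a^* = 1 -> generated (reflmx w a).

Lemma reflectable_neq0 w : reflectable w -> w != 0.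
Proof. by case. Qed.

Lemma reflectable_delta (j : 'I_d) : reflectable 'e_j.
Proof.
split=> [|a a1]; first exact: delta_neq0.
by apply: generator_generated; left; apply: diag_unitary_reflmx_delta.
Qed.

Lemma reflectable_row k : reflectable (row k U).
Proof.
split=> [|a a1]; first exact: row_unitarymx_neq0.
apply: generator_generated; right; exists (reflmx 'e_k a).
split; first exact: diag_unitary_reflmx_delta.
by rewrite adjmxE (reflmx_conj _ _ UU) -rowE.
Qed.

Lemma reflectable_reflmx y w mu : reflectable y -> reflectable w -> mu * mu^* = 1 ->
  reflectable (w *m reflmx y mu).
Proof.
move=> [y0 yG] [w0 wG] mu1; have gU := reflmx_unitary y0 mu1.
split=> [|a a1]; first by rewrite mulmx_unitary_eq0.
rewrite -(reflmx_conj _ _ gU) reflmx_adj; apply: generated_mul; first apply: generated_mul.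
- by apply: yG; rewrite conjCK mulrC.
- exact: wG.
- exact: yG.
Qed.

Lemma reflectableZ c w : c != 0 -> reflectable w -> reflectable (c *: w).
Proof.
move=> c0 [w0 wG]; split=> [|a a1]; last by rewrite reflmxZ //; apply: wG.
by rewrite scaler_eq0 negb_or c0.
Qed.

Lemma reflectable_overlap_step x y t : reflectable x -> reflectable y ->
  0 < overlap x y < 1 -> (1 - 2 * overlap x y) ^+ 2 <= t <= 1 ->
  exists2 y', reflectable y' &
    overlap x y' = t /\ (t < 1 -> exists2 c, c != 0 & y' = x + c *: y).
Proof.
move=> Rx Ry q01 t_range; have x0 := reflectable_neq0 Rx; have y0 := reflectable_neq0 Ry.
have [mu [mu1 muE mu_neq1]] := unimodular_affine_normc2 q01 t_range.
exists (x *m reflmx y mu); first exact: reflectable_reflmx.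
split=> [|t_lt1].
  have nx : dnormR (x *m reflmx y mu) = dnormR x.
    by rewrite /dnormR (dotmx_unitary _ _ (reflmx_unitary y0 mu1)).
  rewrite /overlap -dotmxC normc2J (dotmx_reflmx mu x0 y0) normc2M dnormRE normc2R muE nx.
  have : dnormR x != 0 by rewrite gt_eqF ?dnormR_gt0.
  by move: (dnormR x) => N N0; field.
exists ((mu - 1) / '[y] * '[x, y]); last by rewrite mul_reflmx.
rewrite !mulf_neq0 ?invr_eq0 ?dnorm_eq0 ?subr_eq0 ?mu_neq1 //.
by apply: contraTneq q01 => /overlap_dotmx0 ->; rewrite ltxx.
Qed.


Definition span_reflectable x y : Prop :=
  forall a b, a *: x + b *: y != 0 -> reflectable (a *: x + b *: y).

Lemma span_reflectable_shear x y a' b' : b' != 0 ->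
  span_reflectable x (a' *: x + b' *: y) -> span_reflectable x y.
Proof.
move=> b'0 Sy' a b; have -> : a *: x + b *: y =
    (a - b * a' / b') *: x + (b / b') *: (a' *: x + b' *: y).
  by rewrite scalerDr !scalerA addrA -scalerDl; congr (_ *: _ + _ *: _); field.
exact: Sy'.
Qed.

Lemma reflectable_overlap_shear x y t : reflectable x -> reflectable y ->
  0 < overlap x y < 1 -> (1 - 2 * overlap x y) ^+ 2 <= t < 1 ->
  exists2 y', reflectable y' &
    overlap x y' = t /\ (span_reflectable x y' -> span_reflectable x y).
Proof.
move=> Rx Ry q01 /andP[t_ge t_lt1].
have [|y' Ry' [qy' y'E]] := reflectable_overlap_step Rx Ry q01 (t := t).
  by rewrite t_ge ltW.
have [c c0 y'_def] := y'E t_lt1; exists y' => //; split=> // Sy'.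
by apply: (span_reflectable_shear (a' := 1) c0); rewrite scale1r -y'_def.
Qed.

Lemma reflectable_overlap_half_step x y : reflectable x -> reflectable y ->
  0 < overlap x y < 1 -> 1 / 2 <= 4 * overlap x y * (1 - overlap x y) ->
  exists2 y', reflectable y' &
    overlap x y' = 1 / 2 /\ (span_reflectable x y' -> span_reflectable x y).
Proof.
move=> Rx Ry q01 p_ge; apply: reflectable_overlap_shear => //.
by rewrite logistic_half // ltr_pdivrMr ?ltr0n // mul1r ltr1n.
Qed.

Lemma reflectable_overlap_half_iter k x y : reflectable x -> reflectable y ->
  0 < overlap x y < 1 -> 1 / 2 <= 2 ^+ k * (4 * overlap x y * (1 - overlap x y)) ->
  exists2 y', reflectable y' &
    overlap x y' = 1 / 2 /\ (span_reflectable x y' -> span_reflectable x y).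
Proof.
elim: k y => [|k IH] y Rx Ry q01 p_k.
  by move: p_k; rewrite expr0 (mul1r (_ * _)); apply: reflectable_overlap_half_step.
have [p_ge|p_lt] := lerP (1 / 2) (4 * overlap x y * (1 - overlap x y)).
  exact: reflectable_overlap_half_step.
(* one step maps p = 4 q (1 - q) to 4 p (1 - p), which is at least 2 p *)
rewrite exprS in p_k.
have [q'01 p'_k] := logistic_double q01 (exprn_ge0 k (ler0n _ 2)) p_lt p_k.
have [|y1 Ry1 [qy1 Sy1]] := reflectable_overlap_shear Rx Ry q01 (t := (1 - 2 * overlap x y) ^+ 2).
  by rewrite lexx (andP q'01).2.
have [||y' Ry' [qy' Sy']] := IH y1 Rx Ry1; rewrite ?qy1 //.
by exists y' => //; split=> // /Sy'/Sy1.
Qed.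

Lemma span_reflectable_half x y : reflectable x -> reflectable y ->
  overlap x y = 1 / 2 -> span_reflectable x y.
Proof.
move=> Rx Ry q12 a b ab0; have x0 := reflectable_neq0 Rx; have y0 := reflectable_neq0 Ry.
have [b0|b0] := eqVneq b 0.
  move: ab0; rewrite b0 scale0r addr0 => ax0; apply: reflectableZ Rx.
  by apply: contraNneq ax0 => ->; rewrite scale0r.
have xy0 : '[x, y] != 0.
  apply: contra_eq_neq q12 => /overlap_dotmx0 ->.
  by rewrite eq_sym mulf_eq0 invr_eq0 pnatr_eq0 oner_eq0.
have [mu [lam [mu1 lam1 mu_neq1 lamE]]] := unimodular_cayley (1 + 2 * '[x, y] * a / ('[y] * b)).
have M0 : '[y] != 0 by rewrite dnorm_eq0.
have mu10 : mu - 1 != 0 by rewrite subr_eq0.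
set c := (mu - 1) / '[y] * '[x, y].
have c0 : c != 0 by rewrite /c (mulf_neq0 (mulf_neq0 mu10 (invr_neq0 M0)) xy0).
have -> : a *: x + b *: y = (b / c) *: (x *m reflmx y mu *m reflmx x lam).
  rewrite (reflmx_reflmx mu lam x0 y0) q12 fmorph_div rmorph1 rmorph_nat scalerDr !scalerA -/c.
  congr (_ *: _ + _ *: _); last by rewrite mulfVK.
  have -> : 1 + (lam - 1) * (1 + (mu - 1) * (1 / 2)) = (lam * (1 + mu) - (mu - 1)) / 2.
    by field.
  rewrite lamE /c; move: (mu - 1) '[y] '[x, y] mu10 M0 xy0 => m M g m0 M0' g0.
  by field; rewrite m0 M0' g0 b0.
apply: reflectableZ; first by rewrite mulf_neq0 ?invr_eq0.
exact: reflectable_reflmx Rx (reflectable_reflmx Ry Rx mu1) lam1.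
Qed.

Lemma span_reflectable_overlap x y : reflectable x -> reflectable y ->
  '[x, y] != 0 -> (forall c, y != c *: x) -> span_reflectable x y.
Proof.
move=> Rx Ry xy0 y_x; have x0 := reflectable_neq0 Rx; have y0 := reflectable_neq0 Ry.
have q01 : 0 < overlap x y < 1 by rewrite overlap_gt0 ?overlap_lt1.
have [k p_k] : exists k, 1 / 2 <= 2 ^+ k * (4 * overlap x y * (1 - overlap x y)).
  exact: logistic_bound.
have [y' Ry' [qy' Sy']] := reflectable_overlap_half_iter Rx Ry q01 p_k.
exact/Sy'/span_reflectable_half.
Qed.

Lemma reflectable_sub_delta v i : reflectable v -> v - v 0 i *: 'e_i != 0 ->
  reflectable (v - v 0 i *: 'e_i).
Proof.
move=> Rv v0; have [vi0|vi0] := eqVneq (v 0 i) 0; first by rewrite vi0 scale0r subr0.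
have vE : v - v 0 i *: 'e_i = (- v 0 i) *: 'e_i + 1 *: v by rewrite scale1r scaleNr addrC.
rewrite vE; apply: (span_reflectable_overlap (reflectable_delta i) Rv); last by rewrite -vE.
  by rewrite dotmx_deltal conjC_eq0.
move=> c; apply: contra v0 => /eqP ->.
by rewrite mxE delta_entry eqxx mulr1 subrr.
Qed.

Definition restrict (T : {set 'I_d}) v : 'rV[C]_d := \row_i (if i \in T then v 0 i else 0).

Lemma restrict_cons v i (s : seq 'I_d) :
  let w := restrict [set k | k \notin s] v in
  restrict [set k | k \notin i :: s] v = w - w 0 i *: 'e_i.
Proof.
move=> w; apply/rowP => k; rewrite !mxE !inE negb_or eqxx /=.
have [->|ki] := eqVneq k i; first by rewrite /= mulr1 subrr.
by rewrite mulr0 subr0.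
Qed.

Lemma reflectable_restrict v j (T : {set 'I_d}) : reflectable v -> v 0 j != 0 ->
  j \in T -> reflectable (restrict T v).
Proof.
move=> Rv vj jT.
suff Rs (s : seq 'I_d) : j \notin s -> reflectable (restrict [set i | i \notin s] v).
  have -> : T = [set i | i \notin enum (~: T)].
    by apply/setP => i; rewrite !inE mem_enum inE negbK.
  by apply: Rs; rewrite mem_enum inE negbK.
elim: s => [_|i s IH]; first by congr reflectable: Rv; apply/rowP => i; rewrite mxE inE.
rewrite inE negb_or => /andP[ji js]; rewrite restrict_cons.
apply: reflectable_sub_delta (IH js) _; apply: contraNneq vj => /rowP/(_ j).
by rewrite !mxE !inE js (negbTE ji) /= mulr0 subr0 => ->.
Qed.

Definition supported (S : {set 'I_d}) z : Prop := forall i, i \notin S -> z 0 i = 0.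

Definition reflectable_on (S : {set 'I_d}) : Prop :=
  forall z, z != 0 -> supported S z -> reflectable z.

Lemma reflectable_on1 j : reflectable_on [set j].
Proof.
move=> z z0 zS; have zE : z = z 0 j *: 'e_j.
  apply/rowP => i; rewrite mxE delta_entry.
  by have [->|ij] := eqVneq i j; rewrite ?mulr1 // mulr0 zS // inE.
rewrite zE; apply: reflectableZ (reflectable_delta j).
by apply: contra z0; rewrite {2}zE => /eqP ->; rewrite scale0r.
Qed.

Lemma reflectable_on_row k j l : j != l -> U k j != 0 -> U k l != 0 ->
  reflectable_on [set j; l].
Proof.
move=> jl ukj ukl; set v := restrict [set j; l] (row k U).
have vj : v 0 j = U k j by rewrite !mxE !inE eqxx.
have vl : v 0 l = U k l by rewrite !mxE !inE eqxx orbT.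
have Rv : reflectable v.
  by apply: (reflectable_restrict (j := j) (reflectable_row k)); rewrite ?mxE ?inE ?eqxx.
move=> z z0 zS; set b := z 0 l / v 0 l; set a := z 0 j - b * v 0 j.
have zE : z = a *: 'e_j + b *: v.
  apply/rowP => i; rewrite !mxE !inE eqxx /=.
  have [->|ij] := eqVneq i j; first by rewrite /a mulr1 vj subrK.
  have [->|il] := eqVneq i l; first by rewrite mulr0 add0r /b vl divfK.
  by rewrite /= !mulr0 addr0 zS // !inE negb_or ij.
rewrite zE; apply: (span_reflectable_overlap (reflectable_delta j) Rv); last by rewrite -zE.
  by rewrite dotmx_deltal conjC_eq0 vj.
move=> c; apply/eqP => /rowP/(_ l); rewrite vl mxE delta_entry eq_sym (negbTE jl) mulr0.
exact/eqP.
Qed.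

Lemma reflectable_onU1 S j l : reflectable_on S -> reflectable_on [set j; l] ->
  j \in S -> l \notin S -> reflectable_on (l |: S).
Proof.
move=> RS Rjl jS lS z z0 zS.
set u := z - z 0 l *: 'e_l.
have uS : supported S u.
  move=> i iS; rewrite !mxE eqxx /=; have [->|il] := eqVneq i l; first by rewrite mulr1 subrr.
  by rewrite mulr0 subr0 zS // !inE negb_or il.
have zE : z = u + z 0 l *: 'e_l by rewrite subrK.
clearbody u; have [s [yy uy]] := exists_delta_mirror u j; set y := s *: 'e_j in yy uy.
(* a Householder reflection along u - y, supported in S, moves z into span(e_j, e_l) *)
have Rjl_y : y + z 0 l *: 'e_l != 0 -> reflectable (y + z 0 l *: 'e_l).
  move=> y0; apply: (Rjl _ y0) => i; rewrite !inE negb_or => /andP[ij il].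
  by rewrite !mxE !eqxx /= (negbTE ij) (negbTE il) !mulr0 addr0.
have [uy_eq|u_y] := eqVneq u y; first by rewrite zE uy_eq; apply: Rjl_y; rewrite -uy_eq -zE.
have Rh : reflectable (u - y).
  apply: RS; first by rewrite subr_eq0.
  move=> i iS; have ij : i != j by apply: contraNneq iS => ->.
  by rewrite !mxE (uS i iS) eqxx /= (negbTE ij) mulr0 subr0.
have h0 := reflectable_neq0 Rh.
have Hz : z *m reflmx (u - y) (-1) = y + z 0 l *: 'e_l.
  have lj : l != j by apply: contraNneq lS => ->.
  have ul : '['e_l, u - y] = 0.
    by rewrite dotmx_deltal !mxE (uS l lS) eqxx /= (negbTE lj) mulr0 subr0 conjC0.
  by rewrite {1}zE mulmxDl (reflmx_swap (esym yy) uy u_y) -scalemxAl (reflmx_fix _ ul).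
have N1 : (-1 : C) * (-1)^* = 1 by rewrite rmorphN rmorph1 mulrNN mulr1.
have Hz0 : y + z 0 l *: 'e_l != 0.
  by rewrite -Hz (mulmx_unitary_eq0 _ (reflmx_unitary h0 N1)).
have := reflectable_reflmx Rh (Rjl_y Hz0) N1.
by rewrite -Hz -mulmxA (reflmxM _ _ h0) mulrNN mulr1 reflmx1 mulmx1.
Qed.
End Generated.

Lemma pattern_crossing (R : realType) d (U : 'M[R[i]]_d) (S : {set 'I_d}) i0 :
  (exists M, forall i j, mxpow ((pattern_mx U)^T *m pattern_mx U) M i j != 0) ->
  i0 \in S -> S != setT ->
  exists j l k, [/\ j \in S, l \notin S, U k j != 0 & U k l != 0].
Proof.
move=> [M PM] i0S ST; have [l lS] : exists l, l \notin S.
  apply/existsP; apply: contraNT ST; rewrite negb_exists => /forallP inS.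
  by apply/eqP/setP => i; rewrite inE; move: (inS i); rewrite negbK.
have [/existsP[j /existsP[l' /existsP[k /and4P[]]]]|none] := boolP
  [exists j, exists l, exists k, [&& j \in S, l \notin S, U k j != 0 & U k l != 0]].
  by move=> *; exists j, l', k.
suff : mxpow ((pattern_mx U)^T *m pattern_mx U) M i0 l = 0 by move/eqP; rewrite (negbTE (PM _ _)).
apply: mxpow_block0 i0S lS => j i jS iS; rewrite mxE big1 // => k _; rewrite !mxE.
move/existsPn/(_ j)/existsPn/(_ i)/existsPn/(_ k): none.
by rewrite jS iS /= negb_and !negbK => /orP[] /eqP ->; rewrite eqxx ?mul0r ?mulr0.
Qed.

Section Connected.
Variables (R : realType) (d : nat) (U : 'M[R[i]]_d).
Hypothesis UU : U \is unitarymx.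
Hypothesis pattern_connected :
  exists M, forall i j, mxpow ((pattern_mx U)^T *m pattern_mx U) M i j != 0.

Lemma reflectable_on_card (i0 : 'I_d) k : (k < d)%N ->
  exists S : {set 'I_d}, [/\ i0 \in S, reflectable_on U S & (k < #|S|)%N].
Proof.
elim: k => [_|k IH d_k].
  by exists [set i0]; rewrite set11 cards1; split=> //; apply: reflectable_on1.
have [S [i0S RS kS]] := IH (ltnW d_k).
have [kS'|] := ltnP k.+1 #|S|; first by exists S.
rewrite leq_eqVlt ltnS leqNgt kS orbF => /eqP S_k.
have ST : S != setT.
  by apply: contraTneq d_k => ST; rewrite -S_k ST cardsT card_ord ltnn.
have [j [l [k' [jS lS ukj ukl]]]] := pattern_crossing pattern_connected i0S ST.
have jl : j != l by apply: contraNneq lS => <-.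
exists (l |: S); split; first by rewrite setU1r.
  exact: reflectable_onU1 RS (reflectable_on_row UU jl ukj ukl) jS lS.
by rewrite cardsU1 lS add1n ltnS S_k.
Qed.

Lemma reflectable_all (z : 'rV[R[i]]_d) : z != 0 -> reflectable U z.
Proof.
move=> z0; have [i0 _] : exists i0, z 0 i0 != 0.
  apply/existsP; apply: contraNT z0; rewrite negb_exists => /forallP z_0.
  by apply/eqP/rowP => i; rewrite mxE; apply/eqP; move: (z_0 i); rewrite negbK.
have d_gt0 : (d.-1 < d)%N by rewrite ltn_predL (leq_ltn_trans _ (ltn_ord i0)).
have [S [_ RS dS]] := reflectable_on_card i0 d_gt0.
suff ST : S = setT by apply: RS z0 _ => i; rewrite ST inE.
apply/eqP; rewrite eqEcard subsetT cardsT card_ord.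
by move: dS d_gt0; move: #|S| => c; lia.
Qed.
End Connected.

Theorem theorem10 (R : realType) (d : nat) (U : 'M[R[i]]_d) :
  (2 <= d)%N ->
  unitary U ->
  (exists M : nat, forall i j,
      mxpow ((pattern_mx U)^T *m pattern_mx U) M i j != 0) ->
  forall V : 'M[R[i]]_d, unitary V ->
    exists s : seq 'M[R[i]]_d,
      (forall A, A \in s ->
         diag_unitary A \/
         exists D : 'M[R[i]]_d, diag_unitary D /\ A = adjmx U *m D *m U) /\
      V = mxprod s.
Proof.
move=> _ /unitaryP UU PM V /unitaryP VU; change (generated U V).
have [P [r [PU r1 ->]]] := unitarymx_spectral VU.
have PtP : P^t* *m P = 1%:M.
  by move: PU; rewrite -trmxC_unitary => /unitarymxP; rewrite trmxCK.
rewrite diag_mx_reflmx (mxprod_conj _ PtP (unitarymxP PU)).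
apply: generated_mxprod => _ /mapP[_ /mapP[k _ ->] ->].
rewrite (reflmx_conj _ _ PU) -rowE.
exact: (reflectable_all UU PM (row_unitarymx_neq0 k PU)).2 _ (r1 k).
Qed.
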